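(* Let $G$ be a group with a finite generating set $X$, and let $g\in G$ have infinite order. Then, with respect to the word metric of $X$, $t(g^\infty,g^{-\infty})\ge 1/\sqrt2$, equivalently $s(g^\infty,g^{-\infty})\ge 1/2$.
   Context: $d$ is the word metric of $G$ with respect to $X$ ($d(g,h)$ = length of a shortest word over $X\cup X^{-1}$ representing $g^{-1}h$). For $g$ of infinite order, $g^\infty=\{g^n:n\in\mathbb N\}$ and $g^{-\infty}=(g^{-1})^\infty=\{g^{-n}:n\in\mathbb N\}$. For $\alpha>0$, $c\in\mathbb N$, the $(\alpha,c)$-cone around $g^\infty$ is $\alpha\cdot g^\infty+c=\{v\in G:\exists n\in\mathbb N,\ d(v,g^n)\le\alpha\, d(1,g^n)+c\}$; for a forward orbit $x$ write $x\subseteq\alpha\cdot y+c$ if every element of $x$ lies in the cone around $y$. Define $s(x,y)=\inf\{\alpha>0:\exists c\in\mathbb N,\ x\subseteq\alpha\cdot y+c\text{ and }y\subseteq\alpha\cdot x+c\}$ and $t(x,y)=\sqrt{s(x,y)}$. *)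

From Stdlib Require Import Reals List Classical ClassicalEpsilon.
Import ListNotations.
Open Scope R_scope.

Record Group := {
  carrier :> Type;
  gmul : carrier -> carrier -> carrier;
  ginv : carrier -> carrier;
  gone : carrier;
  gmul_assoc : forall a b c, gmul a (gmul b c) = gmul (gmul a b) c;
  gmul_1l : forall a, gmul gone a = a;
  gmul_Vl : forall a, gmul (ginv a) a = gone
}.

Section GroupDefs.
Variable G : Group.

Fixpoint gpow (g : G) (n : nat) : G :=
  match n with O => gone G | S k => gmul G g (gpow g k) end.

Definition infinite_order (g : G) : Prop := forall n : nat, (1 <= n)%nat -> gpow g n <> gone G.

Definition letter_val (l : G * bool) : G := if snd l then fst l else ginv G (fst l).

Fixpoint word_val (w : list (G * bool)) : G :=
  match w with [] => gone G | l :: w' => gmul G (letter_val l) (word_val w') end.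

Definition word_over (X : list G) (w : list (G * bool)) : Prop :=
  forall l, In l w -> In (fst l) X.

Definition generates (X : list G) : Prop :=
  forall g : G, exists w, word_over X w /\ word_val w = g.

Definition has_word_len (X : list G) (g : G) (n : nat) : Prop :=
  exists w, word_over X w /\ length w = n /\ word_val w = g.

(* word length |g|_X: the least n such that g is represented by a word of length n
   (well defined as soon as X generates G) *)
Definition word_length (X : list G) (g : G) : nat :=
  epsilon (inhabits 0%nat)
    (fun n => has_word_len X g n /\ forall m, has_word_len X g m -> (n <= m)%nat).

Definition word_dist (X : list G) (g h : G) : nat := word_length X (gmul G (ginv G g) h).

(* forward orbit x = {x n : n ∈ ℕ}, given by its enumeration; v lies in the
   (alpha,c)-cone around y *)
Definition in_cone (X : list G) (alpha : R) (c : nat) (y : nat -> G) (v : G) : Prop :=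
  exists n : nat, INR (word_dist X v (y n)) <= alpha * INR (word_dist X (gone G) (y n)) + INR c.

Definition cone_sub (X : list G) (x : nat -> G) (alpha : R) (y : nat -> G) (c : nat) : Prop :=
  forall k : nat, in_cone X alpha c y (x k).

(* the set whose infimum is s(x,y) *)
Definition s_set (X : list G) (x y : nat -> G) (alpha : R) : Prop :=
  0 < alpha /\ exists c : nat, cone_sub X x alpha y c /\ cone_sub X y alpha x c.

Definition fwd_orbit (g : G) : nat -> G := fun n => gpow g n.
Definition bwd_orbit (g : G) : nat -> G := fun n => gpow (ginv G g) n.

End GroupDefs.

(* Write h = g^{-1} and f(j) = |h^j|_X.  Then d(g^k, h^n) = f(k+n) and
   d(1, h^n) = f(n), so the inclusion g^∞ ⊆ α·g^{-∞} + c says: for every k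
   there is n with f(k+n) <= α f(n) + c.  Since h^n = h^{k+n} h^{-k}, the
   triangle inequality gives f(n) <= f(k+n) + f(k).  If α < 1/2, combining
   the two yields (1-α) f(k+n) <= α f(k) + c < (1-α) f(k) as soon as
   f(k) (1-2α) > c.  Because g has infinite order, its powers are pairwise
   distinct and balls of the word metric are finite, so f tends to infinity;
   hence from some index on every value of f is followed by a strictly
   smaller one, an infinite descent in ℕ. *)

From Stdlib Require Import Reals Lra Lia List Classical ClassicalEpsilon Arith.
Import ListNotations.
Open Scope R_scope.

Section GroupIdentities.
Variable G : Group.

Lemma mul_Vr (a : G) : gmul G a (ginv G a) = gone G.
Proof.
  set (b := ginv G a).
  rewrite <- (gmul_1l G (gmul G a b)), <- (gmul_Vl G b) at 1.
  rewrite <- gmul_assoc, (gmul_assoc G b a b).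
  unfold b at 2 3. rewrite gmul_Vl, gmul_1l. apply gmul_Vl.
Qed.

Lemma mul_1r (a : G) : gmul G a (gone G) = a.
Proof. rewrite <- (gmul_Vl G a), gmul_assoc, mul_Vr, gmul_1l. reflexivity. Qed.

Lemma mul_cancel_l (a b c : G) : gmul G a b = gmul G a c -> b = c.
Proof.
  intro H. rewrite <- (gmul_1l G b), <- (gmul_1l G c), <- (gmul_Vl G a),
    <- !gmul_assoc, H. reflexivity.
Qed.

Lemma inv_uniq (a b : G) : gmul G a b = gone G -> ginv G a = b.
Proof.
  intro H. rewrite <- (mul_1r (ginv G a)), <- H, gmul_assoc, gmul_Vl, gmul_1l.
  reflexivity.
Qed.

Lemma inv_inv (a : G) : ginv G (ginv G a) = a.
Proof. apply inv_uniq, gmul_Vl. Qed.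

Lemma inv_mul (a b : G) : ginv G (gmul G a b) = gmul G (ginv G b) (ginv G a).
Proof.
  apply inv_uniq. rewrite gmul_assoc, <- (gmul_assoc G a b), mul_Vr, mul_1r, mul_Vr.
  reflexivity.
Qed.

Lemma inv_one : ginv G (gone G) = gone G.
Proof. apply inv_uniq, gmul_1l. Qed.

Lemma gpow_add (a : G) (m n : nat) :
  gpow G a (m + n) = gmul G (gpow G a m) (gpow G a n).
Proof.
  induction m as [|m IH]; simpl; [now rewrite gmul_1l | now rewrite IH, gmul_assoc].
Qed.

Lemma gpow_inv (a : G) (n : nat) : ginv G (gpow G a n) = gpow G (ginv G a) n.
Proof.
  apply inv_uniq. induction n as [|n IH]; [apply gmul_1l|].
  replace (gpow G a (S n)) with (gpow G a (n + 1)) by (f_equal; lia).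
  rewrite gpow_add. cbn [gpow].
  rewrite mul_1r, <- gmul_assoc, (gmul_assoc G a (ginv G a)), mul_Vr, gmul_1l.
  exact IH.
Qed.

Lemma infinite_order_inv (a : G) : infinite_order G a -> infinite_order G (ginv G a).
Proof.
  intros Ha n Hn E. apply (Ha n Hn).
  rewrite <- (inv_inv (gpow G a n)), gpow_inv, E. apply inv_one.
Qed.

Lemma gpow_injective (a : G) : infinite_order G a ->
  forall i j, gpow G a i = gpow G a j -> i = j.
Proof.
  assert (Hlt : infinite_order G a -> forall i j, (i < j)%nat ->
            gpow G a i <> gpow G a j).
  { intros Ha i j Hij E.
    replace j with (i + (j - i))%nat in E by lia. rewrite gpow_add in E.
    rewrite <- (mul_1r (gpow G a i)) in E at 1. apply mul_cancel_l in E.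
    apply (Ha (j - i)%nat); [lia | auto]. }
  intros Ha i j E. destruct (Nat.lt_trichotomy i j) as [H|[H|H]]; auto.
  - now destruct (Hlt Ha i j H).
  - now destruct (Hlt Ha j i H).
Qed.

End GroupIdentities.

Lemma injective_seq_avoids {A : Type} (u : nat -> A) :
  (forall i j, u i = u j -> i = j) ->
  forall V : list A, exists N, forall j, (N <= j)%nat -> ~ In (u j) V.
Proof.
  intros Hinj V. induction V as [|a V [N HN]]; [exists O; simpl; auto|].
  destruct (classic (exists j0, u j0 = a)) as [[j0 Hj0]|Hno].
  - exists (Nat.max N (S j0)). intros j Hj [Hin|Hin].
    + subst a. apply Hinj in Hin. lia.
    + apply (HN j); auto; lia.
  - exists N. intros j Hj [Hin|Hin]; eauto. apply (HN j); auto.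
Qed.

Lemma exists_least (P : nat -> Prop) : (exists n, P n) ->
  exists n, P n /\ forall m, P m -> (n <= m)%nat.
Proof.
  intros [n Hn]. revert Hn. induction n as [n IH] using lt_wf_ind. intro Hn.
  destruct (classic (exists m, (m < n)%nat /\ P m)) as [[m [Hm Pm]]|Hno].
  - exact (IH m Hm Pm).
  - exists n. split; auto. intros m Pm.
    destruct (Nat.lt_ge_cases m n); auto. exfalso; eauto.
Qed.

Section WordLength.
Variable G : Group.
Variable X : list G.
Hypothesis Hgen : generates G X.

Lemma word_val_app (w1 w2 : list (G * bool)) :
  word_val G (w1 ++ w2) = gmul G (word_val G w1) (word_val G w2).
Proof.
  induction w1 as [|l w1 IH]; simpl; [now rewrite gmul_1l | now rewrite IH, gmul_assoc].
Qed.

Definition flip_letter (l : G * bool) : G * bool := (fst l, negb (snd l)).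

Lemma word_val_inv (w : list (G * bool)) :
  word_val G (rev (map flip_letter w)) = ginv G (word_val G w).
Proof.
  induction w as [|l w IH]; simpl; [now rewrite inv_one|].
  rewrite word_val_app, IH, inv_mul. simpl. rewrite mul_1r. f_equal.
  destruct l as [x []]; unfold letter_val; simpl; [reflexivity | now rewrite inv_inv].
Qed.

Lemma word_length_spec (a : G) :
  has_word_len G X a (word_length G X a) /\
  forall m, has_word_len G X a m -> (word_length G X a <= m)%nat.
Proof.
  unfold word_length. apply epsilon_spec, exists_least.
  destruct (Hgen a) as [w [Hw Hv]]. exists (length w), w; auto.
Qed.

Lemma word_length_mul (a b : G) :
  (word_length G X (gmul G a b) <= word_length G X a + word_length G X b)%nat.
Proof.
  destruct (word_length_spec a) as [[w1 [O1 [L1 V1]]] _].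
  destruct (word_length_spec b) as [[w2 [O2 [L2 V2]]] _].
  apply (proj2 (word_length_spec _)). exists (w1 ++ w2). repeat split.
  - intros l Hl. apply in_app_or in Hl. destruct Hl; auto.
  - rewrite length_app. lia.
  - now rewrite word_val_app, V1, V2.
Qed.

Lemma word_length_inv (a : G) :
  (word_length G X (ginv G a) <= word_length G X a)%nat.
Proof.
  destruct (word_length_spec a) as [[w [O [L V]]] _].
  apply (proj2 (word_length_spec _)). exists (rev (map flip_letter w)). repeat split.
  - intros l Hl. apply in_rev, in_map_iff in Hl. destruct Hl as [l' [<- Hl']].
    simpl. auto.
  - rewrite length_rev, length_map. auto.
  - now rewrite word_val_inv, V.
Qed.

Fixpoint words (n : nat) : list (list (G * bool)) :=
  match n with
  | O => [nil]
  | S n => flat_map (fun w => flat_map (fun x => [(x, true) :: w; (x, false) :: w]) X)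
             (words n)
  end.

Lemma in_words (w : list (G * bool)) : word_over G X w -> In w (words (length w)).
Proof.
  induction w as [|[x b] w IH]; intro H; simpl; auto.
  apply in_flat_map. exists w. split.
  - apply IH. intros l Hl. apply H. simpl; auto.
  - apply in_flat_map. exists x. split.
    + apply (H (x, b)). simpl; auto.
    + destruct b; simpl; auto.
Qed.

Lemma ball_finite (T : nat) :
  exists B : list G, forall a, (word_length G X a <= T)%nat -> In a B.
Proof.
  exists (map (word_val G) (flat_map words (seq 0 (S T)))). intros a Ha.
  destruct (word_length_spec a) as [[w [O [L V]]] _].
  apply in_map_iff. exists w. split; auto.
  apply in_flat_map. exists (length w). split; [apply in_seq; lia | now apply in_words].
Qed.

Lemma word_length_unbounded (u : nat -> G) :
  (forall i j, u i = u j -> i = j) ->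
  forall T, exists N, forall j, (N <= j)%nat -> (T < word_length G X (u j))%nat.
Proof.
  intros Hinj T. destruct (ball_finite T) as [B HB].
  destruct (injective_seq_avoids u Hinj B) as [N HN].
  exists N. intros j Hj.
  destruct (Nat.lt_ge_cases T (word_length G X (u j))) as [H|H]; auto.
  exfalso. exact (HN j Hj (HB _ H)).
Qed.

End WordLength.

Lemma no_infinite_descent (f : nat -> nat) (N : nat) :
  ~ (forall k, (N <= k)%nat -> exists k', (N <= k')%nat /\ (f k' < f k)%nat).
Proof.
  intro Hdesc.
  assert (H : forall v k, (N <= k)%nat -> f k = v -> False).
  { intro v. induction v as [v IH] using lt_wf_ind. intros k Hk Hv.
    destruct (Hdesc k Hk) as [k' [Hk' Hlt]]. apply (IH (f k')) with k'; auto; lia. }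
  exact (H _ N (le_n N) eq_refl).
Qed.

Lemma cone_forces_half (f : nat -> nat) (alpha : R) (c : nat) :
  0 <= alpha ->
  (forall T, exists N, forall j, (N <= j)%nat -> (T < f j)%nat) ->
  (forall k n, (f n <= f (k + n) + f k)%nat) ->
  (forall k, exists n, INR (f (k + n)%nat) <= alpha * INR (f n) + INR c) ->
  1 / 2 <= alpha.
Proof.
  intros Hpos Hunb Htri Hcone.
  destruct (Rle_or_lt (1 / 2) alpha) as [Hle|Hlt]; auto. exfalso.
  destruct (INR_archimed (1 - 2 * alpha) (INR c)) as [T HT]; [lra|].
  destruct (Hunb T) as [N HN].
  apply (no_infinite_descent f N). intros k Hk.
  destruct (Hcone k) as [n Hn]. exists (k + n)%nat. split; [lia|].
  assert (Hbig : INR (f k) * (1 - 2 * alpha) > INR c).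
  { assert (INR T + 1 <= INR (f k)) by (rewrite <- S_INR; apply le_INR, HN, Hk).
    nra. }
  assert (Ht := le_INR _ _ (Htri k n)). rewrite plus_INR in Ht.
  apply INR_lt. nra.
Qed.

Theorem theorem1p2 (G : Group) (X : list G) (g : G) :
  generates G X -> infinite_order G g ->
  forall alpha : R, s_set G X (fwd_orbit G g) (bwd_orbit G g) alpha -> 1 / 2 <= alpha.
Proof.
  intros Hgen Hinf alpha [Hpos [c [Hcone _]]].
  set (h := ginv G g).
  set (f := fun j => word_length G X (gpow G h j)).
  apply (cone_forces_half f alpha c); [lra | | |].
  - apply word_length_unbounded; auto.
    apply gpow_injective, infinite_order_inv, Hinf.
  - (* h^n = h^(k+n) h^{-k} *)
    intros k n. unfold f.
    replace (gpow G h n) with (gmul G (gpow G h (k + n)) (ginv G (gpow G h k))).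
    + eapply Nat.le_trans; [apply word_length_mul; auto|].
      apply Nat.add_le_mono_l, word_length_inv; auto.
    + rewrite Nat.add_comm, gpow_add, <- gmul_assoc, mul_Vr, mul_1r. reflexivity.
  - (* d(g^k, h^n) = |h^(k+n)| and d(1, h^n) = |h^n| *)
    intro k. destruct (Hcone k) as [n Hn]. exists n.
    unfold word_dist, fwd_orbit, bwd_orbit in Hn. fold h in Hn.
    rewrite inv_one, gmul_1l, gpow_inv, <- gpow_add in Hn. exact Hn.
Qed.
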